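(* Let $\alpha>1$. (i) Let $\nu$ be a class (i) or class (ii) distribution with density $f=e^{-\varphi}$, where $f$ is bounded. Let $\eta$ be another distribution with density $g=e^{-\gamma}$. Suppose that $\lim_{x\to\infty}\varphi(x)/\gamma(x)$ exists and that $g/f$ is bounded on every compact interval. Then $\lim_{x\to\infty}\gamma(x)/\varphi(x)>\frac{\alpha-1}{\alpha}$ implies $D_\alpha(\eta|\nu)<\infty$, and $\lim_{x\to\infty}\gamma(x)/\varphi(x)<\frac{\alpha-1}{\alpha}$ implies $D_\alpha(\eta|\nu)=\infty$. (ii) Let $\nu$ be a class (iii) distribution with density $f=e^{-\varphi}$, where $f$ is bounded and $\lim_{x\to\infty}\varphi(x)/\log(x)=c>1$. Let $\eta$ be another distribution with density $g=e^{-\gamma}$. Suppose that $\lim_{x\to\infty}\varphi(x)/\gamma(x)$ exists and that $g/f$ is bounded on every compact interval. Then $\lim_{x\to\infty}\gamma(x)/\varphi(x)>\frac{\alpha-1}{\alpha}+\frac{1}{c\alpha}$ implies $D_\alpha(\eta|\nu)<\infty$, and $\lim_{x\to\infty}\gamma(x)/\varphi(x)<\frac{\alpha-1}{\alpha}+\frac{1}{c\alpha}$ implies $D_\alpha(\eta|\nu)=\infty$.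
   Context: Distributions are probability distributions on $[0,\infty)$ with continuous densities written $f=\exp(-\varphi)$, $g=\exp(-\gamma)$, positive above some threshold. The $\alpha$-divergence ($\alpha>0,\alpha\ne1$) is the $F$-divergence $D_\alpha(\eta|\nu)=\int_0^\infty F(g/f)f\,dx$ with $F(y)=\frac{y^\alpha-1}{\alpha(\alpha-1)}$ (and $+\infty$ if $\eta$ is not absolutely continuous w.r.t. $\nu$). Classes: $\nu$ is class (i) if there is $c>0$ with $\lim_{x\to\infty}\varphi(x)/x>c$. $\nu$ is class (ii) if $\lim_{x\to\infty}\varphi(x)/x=0$, $\lim_{x\to\infty}\varphi(x)/\log x=\infty$, and there exists $\Phi:\mathbb R_+\to\mathbb R$ and $\bar x>0$ such that $\Phi$ is positive, strictly concave, twice differentiable and increasing on $[\bar x,\infty)$, and, with $\Phi^{-1}$ the inverse of $\Phi|_{[\bar x,\infty)}$, $\liminf_{x\to\infty}\Phi^{-1}(\varphi(x))/x>0$ and $\limsup_{x\to\infty}\Phi^{-1}(\varphi(x))/x<\infty$. $\nu$ is class (iii) if $\lim_{x\to\infty}\varphi(x)/\log(x)=c$ for some $c<\infty$. *)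

From Stdlib Require Import Reals Lra.
Open Scope R_scope.

Inductive ERbar : Type := Fin (r : R) | PInf | MInf.

Definition lim_infty (h : R -> R) (L : ERbar) : Prop :=
  match L with
  | Fin l => forall eps, eps > 0 -> exists M, forall x, x > M -> Rabs (h x - l) < eps
  | PInf => forall A, exists M, forall x, x > M -> h x > A
  | MInf => forall A, exists M, forall x, x > M -> h x < A
  end.

Definition ext_gt (L : ERbar) (r : R) : Prop :=
  match L with Fin l => l > r | PInf => True | MInf => False end.
Definition ext_lt (L : ERbar) (r : R) : Prop :=
  match L with Fin l => l < r | PInf => False | MInf => True end.

Definition improper_int (h : R -> R) (l : R) : Prop :=
  (forall b, 0 <= b -> inhabited (Riemann_integrable h 0 b)) /\
  (forall eps, eps > 0 -> exists M, forall b (pr : Riemann_integrable h 0 b),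
       b >= M -> Rabs (RiemannInt pr - l) < eps).

Definition improper_int_infty (h : R -> R) : Prop :=
  (forall b, 0 <= b -> inhabited (Riemann_integrable h 0 b)) /\
  (forall A, exists M, forall b (pr : Riemann_integrable h 0 b),
       b >= M -> RiemannInt pr > A).

(** Probability density on [0,oo): continuous (WLOG extended continuously to R),
    nonnegative, positive above a threshold, total mass 1. *)
Definition is_density (f : R -> R) : Prop :=
  continuity f /\
  (forall x, 0 <= x -> 0 <= f x) /\
  (exists x0, forall x, x > x0 -> f x > 0) /\
  improper_int f 1.

(** phi with f = exp(-phi) (relevant where f > 0). *)
Definition pot (f : R -> R) (x : R) : R := - ln (f x).

Definition rpow (y a : R) : R := if Rle_dec y 0 then 0 else Rpower y a.

Definition Falpha (alpha y : R) : R := (rpow y alpha - 1) / (alpha * (alpha - 1)).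

(** Integrand of D_alpha(eta | nu) with densities g (eta), f (nu). *)
Definition Dalpha_integrand (alpha : R) (f g : R -> R) (x : R) : R :=
  Falpha alpha (g x / f x) * f x.

Definition Dalpha_finite (alpha : R) (f g : R -> R) : Prop :=
  exists l, improper_int (Dalpha_integrand alpha f g) l.

Definition Dalpha_infinite (alpha : R) (f g : R -> R) : Prop :=
  improper_int_infty (Dalpha_integrand alpha f g).

Definition class_i (f : R -> R) : Prop :=
  exists c, c > 0 /\ exists L, lim_infty (fun x => pot f x / x) L /\ ext_gt L c.

Definition class_ii (f : R -> R) : Prop :=
  lim_infty (fun x => pot f x / x) (Fin 0) /\
  lim_infty (fun x => pot f x / ln x) PInf /\
  exists (Phi : R -> R) (xbar : R), xbar > 0 /\
    (forall x, x >= xbar -> Phi x > 0) /\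
    (forall x y t, x >= xbar -> y >= xbar -> x <> y -> 0 < t < 1 ->
        Phi (t * x + (1 - t) * y) > t * Phi x + (1 - t) * Phi y) /\
    (exists Phi' Phi'' : R -> R, forall x, x > xbar ->
        derivable_pt_lim Phi x (Phi' x) /\ derivable_pt_lim Phi' x (Phi'' x)) /\
    (forall x y, xbar <= x -> x < y -> Phi x < Phi y) /\
    (* liminf Phi^{-1}(phi x)/x > 0 and limsup Phi^{-1}(phi x)/x < oo,
       where Phi^{-1} is the inverse of Phi restricted to [xbar, oo) *)
    (exists a b M, a > 0 /\ forall x, x > M ->
        exists y, y >= xbar /\ Phi y = pot f x /\ a * x <= y <= b * x).

Definition class_iii (f : R -> R) : Prop :=
  exists c, lim_infty (fun x => pot f x / ln x) (Fin c).

From Stdlib Require Import Reals Lra Classical.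
From Coquelicot Require Import Coquelicot.
Open Scope R_scope.

(* With [P = (g/f)^alpha f = exp ((alpha - 1) phi - alpha gamma)], the integrand of [D_alpha] is
   [(P - f) / (alpha (alpha - 1))]; as [f] has mass [1], [D_alpha] is finite exactly when [P] is
   integrable at infinity.  Now
     [(alpha - 1) phi - alpha gamma = - (alpha gamma / phi - (alpha - 1)) (phi / log x) log x],
   and [phi / log x] tends to [+oo] in classes (i) and (ii) and to [c] in class (iii).  Hence if
   [lim gamma / phi] lies above the threshold then eventually [P <= x^(-1-d)] for some [d > 0],
   and if it lies below then eventually [P >= 1 / x].  Near [0] the bound on [g / f] keeps [P]
   continuous where [f] vanishes, so [P] is locally Riemann integrable. *)

Lemma Rbar_mult_pos_p_infty k : 0 < k -> Rbar_mult k p_infty = p_infty.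
Proof.
  intros Hk; simpl.
  destruct Rle_dec; [|lra].
  destruct Rle_lt_or_eq_dec; [reflexivity|lra].
Qed.

Lemma exp_le_compat x y : x <= y -> exp x <= exp y.
Proof. intros [H | ->]; [left; apply exp_increasing, H | right; reflexivity]. Qed.

Lemma ln_gt_0 x : 1 < x -> 0 < ln x.
Proof. intros Hx; rewrite <- ln_1; apply ln_increasing; lra. Qed.

Lemma eventually_gt a : Rbar_locally p_infty (fun x => a < x).
Proof. exists a; auto. Qed.

Lemma eventually_ge_pos (P : R -> Prop) : Rbar_locally p_infty P ->
  exists B, 0 < B /\ forall x, B <= x -> P x.
Proof.
  intros [B0 HB0]; exists (Rmax B0 0 + 1); split; [pose proof (Rmax_r B0 0); lra|].
  intros x Hx; apply HB0; pose proof (Rmax_l B0 0); lra.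
Qed.

Lemma continuous_squeeze0 (h u : R -> R) (z : R) :
  locally z (fun y => 0 <= h y <= u y) -> continuous u z -> u z = 0 -> continuous h z.
Proof.
  intros Hle Hu Hu0.
  assert (Hh0 : h z = 0) by (pose proof (locally_singleton _ _ Hle); lra).
  unfold continuous; rewrite Hh0.
  apply (filterlim_le_le (fun _ => 0) h u (Finite 0) Hle).
  - apply filterlim_const.
  - rewrite <- Hu0; exact Hu.
Qed.

Lemma continuity_continuous (h : R -> R) (z : R) : continuity h -> continuous h z.
Proof. intros H; apply continuity_pt_filterlim, H. Qed.

Lemma rpow_nonneg y a : 0 <= rpow y a.
Proof. unfold rpow; destruct Rle_dec; [lra | left; apply exp_pos]. Qed.

Lemma rpow_pos y a : 0 < y -> rpow y a = exp (a * ln y).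
Proof. intros Hy; unfold rpow; destruct Rle_dec; [lra | reflexivity]. Qed.

Lemma rpow_le_abs y a : 1 <= a -> y <= 1 -> rpow y a <= Rabs y.
Proof.
  intros Ha Hy; unfold rpow; destruct Rle_dec; [apply Rabs_pos|].
  rewrite Rabs_pos_eq by lra; unfold Rpower.
  rewrite <- (exp_ln y) at 2 by lra.
  assert (ln y <= 0) by (rewrite <- ln_1; apply ln_le; lra).
  apply exp_le_compat; nra.
Qed.

Lemma rpow_le_compat y v a : 0 < a -> y <= v -> 0 < v -> rpow y a <= rpow v a.
Proof.
  intros Ha Hyv Hv; rewrite (rpow_pos v) by lra; unfold rpow.
  destruct Rle_dec; [left; apply exp_pos|].
  apply exp_le_compat, Rmult_le_compat_l; [lra|]; apply ln_le; lra.
Qed.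

Lemma continuous_rpow a y : 1 <= a -> continuous (fun u => rpow u a) y.
Proof.
  intros Ha; destruct (Rtotal_order y 0) as [Hy|[->|Hy]].
  - apply continuous_ext_loc with (fun _ => 0); [|apply continuous_const].
    apply (filter_imp (fun u => u < 0)); [|exact (open_lt 0 y Hy)].
    intros u Hu; unfold rpow; destruct Rle_dec; lra.
  - apply continuous_squeeze0 with Rabs; [| apply continuous_Rabs | apply Rabs_R0].
    apply (filter_imp (fun u => u < 1)); [|exact (open_lt 1 0 Rlt_0_1)].
    intros u Hu; split; [apply rpow_nonneg | apply rpow_le_abs; lra].
  - apply continuous_ext_loc with (fun u => exp (a * ln u)).
    + apply (filter_imp (fun u => 0 < u)); [|exact (open_gt 0 y Hy)].
      intros u Hu; rewrite rpow_pos; auto.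
    + apply continuous_exp_comp.
      apply (continuous_mult (fun _ => a) ln); [apply continuous_const | apply continuous_ln, Hy].
Qed.

Definition power_integrand (alpha : R) (f g : R -> R) (x : R) : R :=
  rpow (g x / f x) alpha * f x.

Definition log_power_integrand (alpha : R) (f g : R -> R) (x : R) : R :=
  (alpha - 1) * pot f x - alpha * pot g x.

Lemma power_integrand_nonneg alpha f g x : 0 <= f x -> 0 <= power_integrand alpha f g x.
Proof. intros Hf; apply Rmult_le_pos; [apply rpow_nonneg | exact Hf]. Qed.

Lemma power_integrand_exp alpha f g x : 0 < f x -> 0 < g x ->
  power_integrand alpha f g x = exp (log_power_integrand alpha f g x).
Proof.
  intros Hf Hg; unfold power_integrand, log_power_integrand, pot.
  rewrite rpow_pos by (apply Rdiv_lt_0_compat; lra).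
  unfold Rdiv; rewrite ln_mult, ln_Rinv by (auto with real).
  rewrite <- (exp_ln (f x)) at 2 by lra; rewrite <- exp_plus.
  f_equal; ring.
Qed.

Lemma power_integrand_le_ratio alpha f g x K : 0 < alpha -> 0 < K ->
  0 <= f x -> g x <= K * f x -> power_integrand alpha f g x <= rpow K alpha * f x.
Proof.
  intros Ha HK [Hf | Hf] Hgf; unfold power_integrand.
  - apply Rmult_le_compat_r; [lra|]; apply rpow_le_compat; [lra | | lra].
    apply Rmult_le_reg_r with (f x); [lra|].
    unfold Rdiv; rewrite Rmult_assoc, Rinv_l; lra.
  - rewrite <- Hf, !Rmult_0_r; lra.
Qed.

Section Local_integrability.

Variables (alpha : R) (f g : R -> R).
Hypothesis Halpha : 1 <= alpha.
Hypotheses (Cf : continuity f) (Cg : continuity g).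
Hypothesis Pf : forall x, 0 <= x -> 0 <= f x.
Hypothesis Hratio : forall a b, exists K, forall x, a <= x <= b -> 0 <= x -> g x <= K * f x.

Lemma continuous_power_integrand z : f z <> 0 -> continuous (power_integrand alpha f g) z.
Proof.
  intros Hfz; unfold power_integrand.
  apply (continuous_mult (fun y => rpow (g y / f y) alpha) f);
    [| apply continuity_continuous, Cf].
  apply (continuous_comp (fun y => g y / f y) (fun u => rpow u alpha));
    [| apply continuous_rpow, Halpha].
  apply (continuous_mult g (fun y => / f y)); [apply continuity_continuous, Cg|].
  apply continuous_Rinv_comp; [apply continuity_continuous, Cf | exact Hfz].
Qed.

(* Reading the integrand at [|y|] makes it continuous on a neighbourhood of [0]; at a zero
   of [f] the ratio bound squeezes it between [0] and a multiple of [f]. *)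
Lemma continuous_power_integrand_abs z : 0 <= z ->
  continuous (fun y => power_integrand alpha f g (Rabs y)) z.
Proof.
  intros Hz; destruct (Req_dec (f z) 0) as [Hfz | Hfz].
  - destruct (Hratio (z - 1) (z + 1)) as [K HK].
    set (K' := Rmax K 1).
    apply continuous_squeeze0 with (fun y => rpow K' alpha * f (Rabs y)).
    + exists (mkposreal 1 Rlt_0_1); intros y Hy; change (Rabs (y - z) < 1) in Hy.
      assert (Hyz : Rabs (Rabs y - z) < 1).
      { rewrite <- (Rabs_pos_eq z) at 1 by exact Hz.
        eapply Rle_lt_trans; [apply Rabs_triang_inv2 | exact Hy]. }
      apply Rabs_lt_between' in Hyz.
      pose proof (Rabs_pos y) as Hy0.
      split; [apply power_integrand_nonneg, Pf, Hy0|].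
      apply power_integrand_le_ratio; [lra | | apply Pf, Hy0 |].
      { apply Rlt_le_trans with 1; [lra | apply Rmax_r]. }
      apply Rle_trans with (K * f (Rabs y)); [apply HK; lra|].
      apply Rmult_le_compat_r; [apply Pf, Hy0 | apply Rmax_l].
    + apply (continuous_mult (fun _ => rpow K' alpha) (fun y => f (Rabs y)));
        [apply continuous_const|].
      apply (continuous_comp Rabs f); [apply continuous_Rabs | apply continuity_continuous, Cf].
    + rewrite Rabs_pos_eq, Hfz by exact Hz; ring.
  - apply (continuous_comp Rabs (power_integrand alpha f g)); [apply continuous_Rabs|].
    rewrite Rabs_pos_eq by exact Hz; apply continuous_power_integrand, Hfz.
Qed.

Lemma ex_RInt_power_integrand b : 0 <= b -> ex_RInt (power_integrand alpha f g) 0 b.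
Proof.
  intros Hb; apply (ex_RInt_ext (fun y => power_integrand alpha f g (Rabs y))).
  { intros x Hx; rewrite Rmin_left, Rmax_right in Hx by exact Hb.
    rewrite Rabs_pos_eq by lra; reflexivity. }
  apply (ex_RInt_continuous (V := R_CompleteNormedModule)); intros z Hz.
  rewrite Rmin_left, Rmax_right in Hz by exact Hb.
  apply continuous_power_integrand_abs; lra.
Qed.

End Local_integrability.

Section Nonnegative_improper_integrals.

Variable Q : R -> R.
Hypothesis Q_nonneg : forall x, 0 <= x -> 0 <= Q x.
Hypothesis Q_int : forall b, 0 <= b -> ex_RInt Q 0 b.

Lemma RInt_split_nonneg B b : 0 <= B <= b -> RInt Q 0 b = RInt Q 0 B + RInt Q B b.
Proof.
  intros HB; symmetry; apply (RInt_Chasles (V := R_CompleteNormedModule)).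
  - apply (ex_RInt_Chasles_1 (V := R_CompleteNormedModule)) with b; [lra | apply Q_int; lra].
  - apply (ex_RInt_Chasles_2 (V := R_CompleteNormedModule)) with 0; [lra | apply Q_int; lra].
Qed.

Lemma RInt_nonneg_le a b : 0 <= a <= b -> RInt Q 0 a <= RInt Q 0 b.
Proof.
  intros Hab; rewrite (RInt_split_nonneg a b Hab).
  assert (0 <= RInt Q a b); [|lra].
  apply RInt_ge_0; [lra | |intros; apply Q_nonneg; lra].
  apply (ex_RInt_Chasles_2 (V := R_CompleteNormedModule)) with 0; [lra | apply Q_int; lra].
Qed.

Lemma RInt_tail_le (h : R -> R) B b : 0 <= B <= b -> ex_RInt h B b ->
  (forall x, B <= x <= b -> Q x <= h x) -> RInt Q B b <= RInt h B b.
Proof.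
  intros HB Hh Hle; apply RInt_le; [lra | | exact Hh | intros; apply Hle; lra].
  apply (ex_RInt_Chasles_2 (V := R_CompleteNormedModule)) with 0; [lra | apply Q_int; lra].
Qed.

Lemma RInt_tail_ge (h : R -> R) B b : 0 <= B <= b -> ex_RInt h B b ->
  (forall x, B <= x <= b -> h x <= Q x) -> RInt h B b <= RInt Q B b.
Proof.
  intros HB Hh Hle; apply RInt_le; [lra | exact Hh | | intros; apply Hle; lra].
  apply (ex_RInt_Chasles_2 (V := R_CompleteNormedModule)) with 0; [lra | apply Q_int; lra].
Qed.

Lemma is_lim_RInt_of_bounded U : (forall b, 0 <= b -> RInt Q 0 b <= U) ->
  exists l : R, is_lim (fun b => RInt Q 0 b) p_infty l.
Proof.
  intros HU.
  set (E := fun y => exists b, 0 <= b /\ y = RInt Q 0 b).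
  destruct (completeness E) as [l [Hub Hlub]].
  - exists U; intros y [b [Hb ->]]; apply HU, Hb.
  - exists (RInt Q 0 0), 0; split; [lra | reflexivity].
  - exists l; apply is_lim_spec; intros eps.
    assert (Hb0 : exists b0, 0 <= b0 /\ l - eps < RInt Q 0 b0).
    { apply NNPP; intros Hn.
      assert (l <= l - eps) by (apply Hlub; intros y [b [Hb ->]];
        apply Rnot_lt_le; intros Hc; apply Hn; exists b; auto).
      pose proof (cond_pos eps); lra. }
    destruct Hb0 as [b0 [Hb0 Hl]].
    exists b0; intros b Hb.
    assert (RInt Q 0 b0 <= RInt Q 0 b) by (apply RInt_nonneg_le; lra).
    assert (RInt Q 0 b <= l) by (apply Hub; exists b; split; [lra | reflexivity]).
    apply Rabs_lt_between'; pose proof (cond_pos eps); lra.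
Qed.

End Nonnegative_improper_integrals.

Lemma exp_neg_succ_ln d x : 0 < x -> exp (- (1 + d) * ln x) = exp (- d * ln x) / x.
Proof.
  intros Hx; replace (- (1 + d) * ln x) with (- d * ln x + - ln x) by ring.
  rewrite exp_plus, exp_Ropp, exp_ln by exact Hx; reflexivity.
Qed.

Lemma is_RInt_exp_neg_succ_ln d B b : 0 < d -> 0 < B <= b ->
  is_RInt (fun x => exp (- (1 + d) * ln x)) B b
    (- exp (- d * ln b) / d - - exp (- d * ln B) / d).
Proof.
  intros Hd HB.
  apply (is_RInt_derive (V := R_CompleteNormedModule) (fun x => - exp (- d * ln x) / d));
    intros x Hx; rewrite Rmin_left, Rmax_right in Hx by lra.
  - rewrite exp_neg_succ_ln by lra; auto_derive; [lra | field; lra].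
  - apply (ex_derive_continuous (K := R_AbsRing) (V := R_NormedModule)); auto_derive; lra.
Qed.

Lemma is_RInt_inv B b : 0 < B <= b -> is_RInt Rinv B b (ln b - ln B).
Proof.
  intros HB; apply (is_RInt_derive (V := R_CompleteNormedModule) ln);
    intros x Hx; rewrite Rmin_left, Rmax_right in Hx by lra.
  - auto_derive; [lra | field; lra].
  - apply (ex_derive_continuous (K := R_AbsRing) (V := R_NormedModule)); auto_derive; lra.
Qed.

Section Comparison_tests.

Variable Q : R -> R.
Hypothesis Q_nonneg : forall x, 0 <= x -> 0 <= Q x.
Hypothesis Q_int : forall b, 0 <= b -> ex_RInt Q 0 b.

Lemma is_lim_RInt_of_le_power_decay d : 0 < d ->
  Rbar_locally p_infty (fun x => Q x <= exp (- (1 + d) * ln x)) ->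
  exists l : R, is_lim (fun b => RInt Q 0 b) p_infty l.
Proof.
  intros Hd Hev; destruct (eventually_ge_pos _ Hev) as [B [HB Hle]].
  apply (is_lim_RInt_of_bounded Q Q_nonneg Q_int (RInt Q 0 B + exp (- d * ln B) / d)).
  assert (Htail : 0 <= exp (- d * ln B) / d)
    by (apply Rlt_le, Rdiv_lt_0_compat; [apply exp_pos | lra]).
  intros b Hb; destruct (Rle_lt_dec b B) as [HbB | HBb].
  - pose proof (RInt_nonneg_le Q Q_nonneg Q_int b B (conj Hb HbB)); lra.
  - rewrite (RInt_split_nonneg Q Q_int B b) by lra.
    pose proof (is_RInt_exp_neg_succ_ln d B b Hd (conj HB (Rlt_le _ _ HBb))) as Hpow.
    assert (Hcmp : RInt Q B b <= RInt (fun x => exp (- (1 + d) * ln x)) B b).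
    { apply (RInt_tail_le Q Q_int); [lra | eexists; exact Hpow | intros x Hx; apply Hle; lra]. }
    rewrite (is_RInt_unique _ _ _ _ Hpow) in Hcmp.
    assert (0 < exp (- d * ln b) / d) by (apply Rdiv_lt_0_compat; [apply exp_pos | lra]).
    unfold Rdiv in *; lra.
Qed.

Lemma is_lim_RInt_of_ge_inv : Rbar_locally p_infty (fun x => / x <= Q x) ->
  is_lim (fun b => RInt Q 0 b) p_infty p_infty.
Proof.
  intros Hev; destruct (eventually_ge_pos _ Hev) as [B [HB Hge]].
  apply is_lim_le_p_loc with (fun b => ln b - ln B).
  - exists B; intros b Hb.
    rewrite (RInt_split_nonneg Q Q_int B b) by lra.
    pose proof (is_RInt_inv B b (conj HB (Rlt_le _ _ Hb))) as Hinv.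
    assert (Hcmp : ln b - ln B <= RInt Q B b).
    { rewrite <- (is_RInt_unique _ _ _ _ Hinv).
      apply (RInt_tail_ge Q Q_int); [lra | eexists; exact Hinv | intros x Hx; apply Hge; lra]. }
    pose proof (RInt_nonneg_le Q Q_nonneg Q_int 0 B (conj (Rle_refl 0) (Rlt_le _ _ HB))) as HQB.
    rewrite RInt_point in HQB; change (zero : R) with 0 in HQB; lra.
  - eapply is_lim_minus; [apply is_lim_ln_p | apply is_lim_const | reflexivity].
Qed.

End Comparison_tests.

Lemma improper_int_of_is_lim h (l : R) : (forall b, 0 <= b -> ex_RInt h 0 b) ->
  is_lim (fun b => RInt h 0 b) p_infty l -> improper_int h l.
Proof.
  intros Hint Hlim; split.
  - intros b Hb; constructor; apply ex_RInt_Reals_0, Hint, Hb.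
  - intros eps Heps; apply is_lim_spec in Hlim.
    destruct (Hlim (mkposreal eps Heps)) as [M HM].
    exists (M + 1); intros b pr Hb; rewrite <- RInt_Reals; apply HM; lra.
Qed.

Lemma improper_int_infty_of_is_lim h : (forall b, 0 <= b -> ex_RInt h 0 b) ->
  is_lim (fun b => RInt h 0 b) p_infty p_infty -> improper_int_infty h.
Proof.
  intros Hint Hlim; split.
  - intros b Hb; constructor; apply ex_RInt_Reals_0, Hint, Hb.
  - intros A; apply is_lim_spec in Hlim.
    destruct (Hlim A) as [M HM].
    exists (M + 1); intros b pr Hb; rewrite <- RInt_Reals; apply HM; lra.
Qed.

Lemma is_lim_of_improper_int h l : improper_int h l ->
  is_lim (fun b => RInt h 0 b) p_infty l.
Proof.
  intros [Hint Hlim]; apply is_lim_spec; intros eps.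
  destruct (Hlim eps (cond_pos eps)) as [M HM].
  exists (Rmax M 0); intros b Hb.
  assert (Hb0 : 0 <= b) by (pose proof (Rmax_r M 0); lra).
  destruct (Hint b Hb0) as [pr]; rewrite (RInt_Reals h 0 b pr).
  apply HM; pose proof (Rmax_l M 0); lra.
Qed.

Lemma ex_RInt_of_density f b : is_density f -> ex_RInt f 0 b.
Proof.
  intros [Cf _].
  apply (ex_RInt_continuous (V := R_CompleteNormedModule)); intros; apply continuity_continuous, Cf.
Qed.

Lemma density_eventually_pos f : is_density f -> Rbar_locally p_infty (fun x => 0 < f x).
Proof. intros [_ [_ [[x0 Hx0] _]]]; exists x0; exact Hx0. Qed.

Section Dalpha_criteria.

Variables (alpha : R) (f g : R -> R).
Hypothesis Halpha : 1 < alpha.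
Hypotheses (Df : is_density f) (Dg : is_density g).
Hypothesis Hratio : forall a b, exists K, forall x, a <= x <= b -> 0 <= x -> g x <= K * f x.

Let P := power_integrand alpha f g.
Let k := / (alpha * (alpha - 1)).

Lemma ex_RInt_power_integrand_of_densities b : 0 <= b -> ex_RInt P 0 b.
Proof.
  destruct Df as [Cf [Pf _]]; destruct Dg as [Cg _].
  apply ex_RInt_power_integrand; auto; lra.
Qed.

Lemma power_integrand_nonneg_of_density x : 0 <= x -> 0 <= P x.
Proof. destruct Df as [_ [Pf _]]; intros; apply power_integrand_nonneg, Pf; auto. Qed.

Lemma Dalpha_integrand_eq x : Dalpha_integrand alpha f g x = scal k (minus (P x) (f x)).
Proof.
  unfold Dalpha_integrand, Falpha, k, P, power_integrand.
  change (scal ?a ?b) with (a * b); unfold minus, plus, opp; simpl.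
  field; split; lra.
Qed.

Lemma ex_RInt_power_integrand_minus_density b : 0 <= b ->
  ex_RInt (fun x => minus (P x) (f x)) 0 b.
Proof.
  intros Hb; apply (ex_RInt_minus (V := R_NormedModule));
    [apply ex_RInt_power_integrand_of_densities, Hb | apply ex_RInt_of_density, Df].
Qed.

Lemma ex_RInt_Dalpha_integrand b : 0 <= b -> ex_RInt (Dalpha_integrand alpha f g) 0 b.
Proof.
  intros Hb; apply (ex_RInt_ext (V := R_NormedModule) (fun x => scal k (minus (P x) (f x)))).
  { intros x _; symmetry; apply Dalpha_integrand_eq. }
  apply (ex_RInt_scal (V := R_NormedModule)), ex_RInt_power_integrand_minus_density, Hb.
Qed.

Lemma RInt_Dalpha_integrand b : 0 <= b ->
  RInt (Dalpha_integrand alpha f g) 0 b = k * (RInt P 0 b - RInt f 0 b).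
Proof.
  intros Hb.
  rewrite (RInt_ext (V := R_CompleteNormedModule) _ (fun x => scal k (minus (P x) (f x))))
    by (intros x _; apply Dalpha_integrand_eq).
  rewrite (RInt_scal (V := R_CompleteNormedModule))
    by apply ex_RInt_power_integrand_minus_density, Hb.
  rewrite (RInt_minus (V := R_CompleteNormedModule));
    [reflexivity | apply ex_RInt_power_integrand_of_densities, Hb | apply ex_RInt_of_density, Df].
Qed.

Lemma is_lim_RInt_Dalpha_integrand (lP : Rbar) :
  is_lim (fun b => RInt P 0 b) p_infty lP ->
  is_lim (fun b => RInt (Dalpha_integrand alpha f g) 0 b) p_infty (Rbar_mult k (Rbar_minus lP 1)).
Proof.
  intros HP.
  apply is_lim_ext_loc with (fun b => k * (RInt P 0 b - RInt f 0 b)).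
  { exists 0; intros b Hb; symmetry; apply RInt_Dalpha_integrand; lra. }
  apply is_lim_scal_l, is_lim_minus with lP 1; [exact HP | |].
  - destruct Df as [_ [_ [_ Hf1]]]; apply is_lim_of_improper_int, Hf1.
  - destruct lP; reflexivity.
Qed.

Lemma Dalpha_finite_of_log_le d : 0 < d ->
  Rbar_locally p_infty (fun x =>
    0 < f x /\ 0 < g x /\ log_power_integrand alpha f g x <= - (1 + d) * ln x) ->
  Dalpha_finite alpha f g.
Proof.
  intros Hd Hlog.
  destruct (is_lim_RInt_of_le_power_decay P power_integrand_nonneg_of_density
    ex_RInt_power_integrand_of_densities d Hd) as [l Hl].
  { revert Hlog; apply filter_imp; intros x (Hf & Hg & Hlog).
    unfold P; rewrite power_integrand_exp by assumption; apply exp_le_compat, Hlog. }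
  exists (k * (l - 1)).
  apply improper_int_of_is_lim; [apply ex_RInt_Dalpha_integrand|].
  exact (is_lim_RInt_Dalpha_integrand _ Hl).
Qed.

Lemma Dalpha_infinite_of_log_ge :
  Rbar_locally p_infty (fun x =>
    0 < f x /\ 0 < g x /\ - ln x <= log_power_integrand alpha f g x) ->
  Dalpha_infinite alpha f g.
Proof.
  intros Hlog.
  apply improper_int_infty_of_is_lim; [apply ex_RInt_Dalpha_integrand|].
  replace p_infty with (Rbar_mult k (Rbar_minus p_infty 1)) at 2
    by (apply Rbar_mult_pos_p_infty, Rinv_0_lt_compat; nra).
  apply is_lim_RInt_Dalpha_integrand.
  apply (is_lim_RInt_of_ge_inv P power_integrand_nonneg_of_density
    ex_RInt_power_integrand_of_densities).
  generalize (filter_and _ _ (eventually_gt 0) Hlog); apply filter_imp.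
  intros x (Hx & Hf & Hg & Hle).
  replace (/ x) with (exp (- ln x)) by (rewrite exp_Ropp, exp_ln; lra).
  unfold P; rewrite power_integrand_exp by assumption; apply exp_le_compat, Hle.
Qed.

End Dalpha_criteria.

Lemma log_le_of_ratios a m u v lx d : 0 < a -> 0 < lx -> 0 < u / lx -> m < v / u ->
  1 + d < (a * m - (a - 1)) * (u / lx) -> (a - 1) * u - a * v <= - (1 + d) * lx.
Proof.
  intros Ha Hlx Hq Hr Hk.
  set (q := u / lx) in *; set (r := v / u) in *.
  assert (Hu : u = q * lx) by (unfold q; field; lra).
  assert (Hv : v = r * u) by (unfold r; field; nra).
  assert (Hm : a * m * u < a * r * u) by (apply Rmult_lt_compat_r; nra).
  assert (Hd : (1 + d) * lx < (a * m - (a - 1)) * q * lx) by (apply Rmult_lt_compat_r; lra).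
  replace ((a * m - (a - 1)) * q * lx) with ((a * m - (a - 1)) * u) in Hd by (rewrite Hu; ring).
  rewrite Hv; lra.
Qed.

Lemma log_ge_of_ratios a m u v lx : 0 < a -> 0 < lx -> 0 < u / lx -> v / u < m ->
  (a * m - (a - 1)) * (u / lx) <= 1 -> - lx <= (a - 1) * u - a * v.
Proof.
  intros Ha Hlx Hq Hr Hk.
  set (q := u / lx) in *; set (r := v / u) in *.
  assert (Hu : u = q * lx) by (unfold q; field; lra).
  assert (Hv : v = r * u) by (unfold r; field; nra).
  assert (Hm : a * r * u < a * m * u) by (apply Rmult_lt_compat_r; nra).
  assert (Hd : (a * m - (a - 1)) * q * lx <= lx)
    by (rewrite <- (Rmult_1_l lx) at 2; apply Rmult_le_compat_r; lra).
  replace ((a * m - (a - 1)) * q * lx) with ((a * m - (a - 1)) * u) in Hd by (rewrite Hu; ring).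
  rewrite Hv; lra.
Qed.

Lemma lim_infty_eventually_gt h L r : lim_infty h L -> ext_gt L r ->
  Rbar_locally p_infty (fun x => r < h x).
Proof.
  destruct L as [l | |]; simpl; intros Hl Hr; [| | contradiction].
  - destruct (Hl (l - r) ltac:(lra)) as [M HM]; exists M; intros x Hx.
    specialize (HM x Hx); apply Rabs_lt_between' in HM; lra.
  - destruct (Hl r) as [M HM]; exists M; exact HM.
Qed.

Lemma lim_infty_eventually_lt h L r : lim_infty h L -> ext_lt L r ->
  Rbar_locally p_infty (fun x => h x < r).
Proof.
  destruct L as [l | |]; simpl; intros Hl Hr; [| contradiction |].
  - destruct (Hl (r - l) ltac:(lra)) as [M HM]; exists M; intros x Hx.
    specialize (HM x Hx); apply Rabs_lt_between' in HM; lra.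
  - destruct (Hl r) as [M HM]; exists M; exact HM.
Qed.

Lemma ext_gt_between L r : ext_gt L r -> exists s, r < s /\ ext_gt L s.
Proof.
  destruct L as [l | |]; simpl; intros Hr; [| | contradiction].
  - exists ((r + l) / 2); split; lra.
  - exists (r + 1); split; [lra | exact I].
Qed.

Lemma ext_lt_between L r : ext_lt L r -> exists s, s < r /\ ext_lt L s.
Proof.
  destruct L as [l | |]; simpl; intros Hr; [| contradiction |].
  - exists ((r + l) / 2); split; lra.
  - exists (r - 1); split; [lra | exact I].
Qed.

(* The paper's [1 / c], with [1 / +oo = 0]; the value at [MInf] is never used. *)
Definition ext_inv (L : ERbar) : R := match L with Fin c => / c | _ => 0 end.

Section Eventual_bounds.

Variables (h : R -> R) (L : ERbar).
Hypothesis Hlim : lim_infty h L.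
Hypothesis L_pos : ext_gt L 0.

Lemma ext_inv_nonneg : 0 <= ext_inv L.
Proof.
  destruct L as [c | |]; simpl in *; [| lra | contradiction].
  left; apply Rinv_0_lt_compat, L_pos.
Qed.

Lemma lim_infty_eventually_mult_gt k : ext_inv L < k ->
  exists d, 0 < d /\ Rbar_locally p_infty (fun x => 1 + d < k * h x).
Proof.
  intros Hk; pose proof ext_inv_nonneg as Hinv.
  assert (Hk_inv : ext_gt L (/ k)).
  { destruct L as [c | |]; simpl in *; [| exact I | contradiction].
    unfold Rgt; rewrite <- (Rinv_inv c).
    apply Rinv_lt_contravar; [apply Rmult_lt_0_compat; [apply Rinv_0_lt_compat |] |]; lra. }
  destruct (ext_gt_between _ _ Hk_inv) as [s [Hs HLs]].
  assert (Hks : 1 < k * s).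
  { rewrite <- (Rinv_r k) by lra; apply Rmult_lt_compat_l; lra. }
  exists (k * s - 1); split; [lra|].
  apply (filter_imp (fun x => s < h x)); [| exact (lim_infty_eventually_gt h L s Hlim HLs)].
  intros x Hx; assert (k * s < k * h x) by (apply Rmult_lt_compat_l; lra); lra.
Qed.

Lemma lim_infty_eventually_mult_le k : k < ext_inv L ->
  Rbar_locally p_infty (fun x => k * h x <= 1).
Proof.
  intros Hk; destruct (Rle_lt_dec k 0) as [Hk0 | Hk0].
  - apply (filter_imp (fun x => 0 < h x)); [| exact (lim_infty_eventually_gt h L 0 Hlim L_pos)].
    intros x Hx; nra.
  - assert (Hk_inv : ext_lt L (/ k)).
    { destruct L as [c | |]; simpl in *; [| lra | contradiction].
      rewrite <- (Rinv_inv c).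
      apply Rinv_lt_contravar; [apply Rmult_lt_0_compat; [| apply Rinv_0_lt_compat] |]; lra. }
    apply (filter_imp (fun x => h x < / k)); [| exact (lim_infty_eventually_lt h L _ Hlim Hk_inv)].
    intros x Hx; left; rewrite <- (Rinv_r k) by lra; apply Rmult_lt_compat_l; lra.
Qed.

End Eventual_bounds.

Lemma lim_infty_pot_div_ln_of_class f : class_i f \/ class_ii f ->
  lim_infty (fun x => pot f x / ln x) PInf.
Proof.
  intros [[c [Hc [L [HL HLc]]]] | [_ [Hln _]]]; [| exact Hln].
  intros A; set (A' := Rmax A 1).
  assert (HA' : 0 < A') by (unfold A'; apply Rlt_le_trans with 1; [lra | apply Rmax_r]).
  assert (Hlnx : Rbar_locally p_infty (fun x => Rabs (ln x / x - 0) < c / A')).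
  { exact (proj2 (is_lim_spec _ _ _) is_lim_div_ln_p (mkposreal _ (Rdiv_lt_0_compat _ _ Hc HA'))). }
  generalize (filter_and _ _ (lim_infty_eventually_gt _ _ _ HL HLc)
    (filter_and _ _ Hlnx (eventually_gt 1))).
  intros [M HM]; exists M; intros x Hx.
  destruct (HM x Hx) as [Hpot [Hln Hx1]].
  assert (Hlnpos : 0 < ln x) by (apply ln_gt_0, Hx1).
  rewrite Rminus_0_r, Rabs_pos_eq in Hln by (apply Rlt_le, Rdiv_lt_0_compat; lra).
  assert (Hcx : c * x < pot f x).
  { replace (pot f x) with (pot f x / x * x) by (field; lra); apply Rmult_lt_compat_r; lra. }
  assert (HAln : A' * ln x < c * x).
  { replace (A' * ln x) with (A' * (ln x / x) * x) by (field; lra).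
    apply Rmult_lt_compat_r; [lra|].
    replace c with (A' * (c / A')) by (field; lra); apply Rmult_lt_compat_l; lra. }
  unfold Rgt; apply Rle_lt_trans with A'; [apply Rmax_l|].
  apply Rmult_lt_reg_r with (ln x); [exact Hlnpos|].
  unfold Rdiv; rewrite Rmult_assoc, Rinv_l; lra.
Qed.

Section Dalpha_dichotomy.

Variables (alpha : R) (f g : R -> R) (L M : ERbar).
Hypothesis Halpha : 1 < alpha.
Hypotheses (Df : is_density f) (Dg : is_density g).
Hypothesis Hratio : forall a b, exists K, forall x, a <= x <= b -> 0 <= x -> g x <= K * f x.
Hypothesis Hpot_f : lim_infty (fun x => pot f x / ln x) L.
Hypothesis L_pos : ext_gt L 0.
Hypothesis Hpot_gf : lim_infty (fun x => pot g x / pot f x) M.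

Lemma eventually_regular :
  Rbar_locally p_infty (fun x => 1 < x /\ 0 < f x /\ 0 < g x /\ 0 < pot f x / ln x).
Proof.
  repeat apply filter_and;
    [apply eventually_gt | apply density_eventually_pos, Df | apply density_eventually_pos, Dg |].
  exact (lim_infty_eventually_gt _ _ _ Hpot_f L_pos).
Qed.

Lemma Dalpha_dichotomy :
  (ext_gt M ((alpha - 1) / alpha + ext_inv L / alpha) -> Dalpha_finite alpha f g) /\
  (ext_lt M ((alpha - 1) / alpha + ext_inv L / alpha) -> Dalpha_infinite alpha f g).
Proof.
  assert (Hthreshold : alpha * ((alpha - 1) / alpha + ext_inv L / alpha) = alpha - 1 + ext_inv L)
    by (field; lra).
  split.
  - intros HM; destruct (ext_gt_between _ _ HM) as [m [Hm HMm]].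
    assert (Hk : ext_inv L < alpha * m - (alpha - 1)).
    { apply (Rmult_lt_compat_l alpha) in Hm; [rewrite Hthreshold in Hm; lra | lra]. }
    destruct (lim_infty_eventually_mult_gt _ _ Hpot_f L_pos _ Hk) as [d [Hd Hev]].
    apply (Dalpha_finite_of_log_le alpha f g Halpha Df Dg Hratio d Hd).
    generalize (filter_and _ _ eventually_regular
      (filter_and _ _ Hev (lim_infty_eventually_gt _ _ _ Hpot_gf HMm))).
    apply filter_imp; intros x ((Hx & Hf & Hg & Hq) & Hkq & Hr).
    split; [exact Hf | split; [exact Hg|]].
    apply log_le_of_ratios with m; [lra | apply ln_gt_0 | | |]; assumption.
  - intros HM; destruct (ext_lt_between _ _ HM) as [m [Hm HMm]].
    assert (Hk : alpha * m - (alpha - 1) < ext_inv L).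
    { apply (Rmult_lt_compat_l alpha) in Hm; [rewrite Hthreshold in Hm; lra | lra]. }
    apply (Dalpha_infinite_of_log_ge alpha f g Halpha Df Dg Hratio).
    generalize (filter_and _ _ eventually_regular
      (filter_and _ _ (lim_infty_eventually_mult_le _ _ Hpot_f L_pos _ Hk)
         (lim_infty_eventually_lt _ _ _ Hpot_gf HMm))).
    apply filter_imp; intros x ((Hx & Hf & Hg & Hq) & Hkq & Hr).
    split; [exact Hf | split; [exact Hg|]].
    apply log_ge_of_ratios with m; [lra | apply ln_gt_0 | | |]; assumption.
Qed.

End Dalpha_dichotomy.

Theorem proposition3p3 (alpha : R) (halpha : alpha > 1) :
  (forall f g : R -> R,
     is_density f -> is_density g ->
     (class_i f \/ class_ii f) ->
     (exists K, forall x, 0 <= x -> f x <= K) ->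
     (exists L, lim_infty (fun x => pot f x / pot g x) L) ->
     (forall a b, exists K, forall x, a <= x <= b -> 0 <= x -> g x <= K * f x) ->
     forall M, lim_infty (fun x => pot g x / pot f x) M ->
       (ext_gt M ((alpha - 1) / alpha) -> Dalpha_finite alpha f g) /\
       (ext_lt M ((alpha - 1) / alpha) -> Dalpha_infinite alpha f g)) /\
  (forall (f g : R -> R) (c : R),
     is_density f -> is_density g ->
     c > 1 ->
     lim_infty (fun x => pot f x / ln x) (Fin c) ->
     (exists K, forall x, 0 <= x -> f x <= K) ->
     (exists L, lim_infty (fun x => pot f x / pot g x) L) ->
     (forall a b, exists K, forall x, a <= x <= b -> 0 <= x -> g x <= K * f x) ->
     forall M, lim_infty (fun x => pot g x / pot f x) M ->
       (ext_gt M ((alpha - 1) / alpha + 1 / (c * alpha)) -> Dalpha_finite alpha f g) /\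
       (ext_lt M ((alpha - 1) / alpha + 1 / (c * alpha)) -> Dalpha_infinite alpha f g)).
Proof.
  split.
  - intros f g Df Dg Hclass _ _ Hratio M HM.
    replace ((alpha - 1) / alpha) with ((alpha - 1) / alpha + ext_inv PInf / alpha)
      by (simpl; field; lra).
    exact (Dalpha_dichotomy alpha f g PInf M halpha Df Dg Hratio
      (lim_infty_pot_div_ln_of_class f Hclass) I HM).
  - intros f g c Df Dg Hc Hpot _ _ Hratio M HM.
    replace ((alpha - 1) / alpha + 1 / (c * alpha))
      with ((alpha - 1) / alpha + ext_inv (Fin c) / alpha) by (simpl; field; lra).
    exact (Dalpha_dichotomy alpha f g (Fin c) M halpha Df Dg Hratio Hpot
      ltac:(simpl; lra) HM).
Qed.
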